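(* Let $k\ge1$ be an integer, $\rho\ne0$ real, $0\le q<1$, and $z$ a complex number. Then, as formal power series in $t$, $$\frac{1}{(1+\rho t)^{z/\rho}}\,{\rm Lif}_{k,q}\!\left(\frac{\ln(1+\rho t)}{\rho}\right)=\sum_{n=0}^\infty c_{n,\rho,q}^{(k)}(z)\frac{t^n}{n!},$$ where $(1+\rho t)^{-z/\rho}=\exp\!\big(-\tfrac{z}{\rho}\ln(1+\rho t)\big)$.
   Context: For real $0\le q<1$ (with $0^0=1$), $[x]_q=\frac{1-q^x}{1-q}$. The $q$-polyfactorial function is ${\rm Lif}_{k,q}(w)=\sum_{n=0}^\infty\frac{w^n}{n!\,[n+1]_q^k}$. Jackson's $q$-integral: $\int_0^1 f(x)\,d_qx=(1-q)\sum_{j\ge0} f(q^j)q^j$; multiple integrals are iterated. $(x)_n=x(x-1)\cdots(x-n+1)$, $(x)_0=1$. The $q$-poly-Cauchy polynomials of the first kind with parameter $\rho$ are $c_{n,\rho,q}^{(k)}(z)=\rho^n\int_0^1\cdots\int_0^1\left(\frac{x_1\cdots x_k-z}{\rho}\right)_n d_qx_1\cdots d_qx_k$ ($k$-fold). *)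

From Stdlib Require Import Reals Arith ClassicalEpsilon List.
Open Scope R_scope.

Definition Cplx : Type := (R * R)%type.
Definition RtoC (r : R) : Cplx := (r, 0).
Definition C0 : Cplx := (0, 0).
Definition C1 : Cplx := (1, 0).
Definition Cadd (a b : Cplx) : Cplx := (fst a + fst b, snd a + snd b).
Definition Copp (a : Cplx) : Cplx := (- fst a, - snd a).
Definition Csub (a b : Cplx) : Cplx := Cadd a (Copp b).
Definition Cmul (a b : Cplx) : Cplx :=
  (fst a * fst b - snd a * snd b, fst a * snd b + snd a * fst b).
Definition Cscale (r : R) (a : Cplx) : Cplx := (r * fst a, r * snd a).

Fixpoint Csum (f : nat -> Cplx) (n : nat) : Cplx :=
  match n with O => C0 | S m => Cadd (Csum f m) (f m) end.

Definition Cseries_sum (a : nat -> Cplx) (l : Cplx) : Prop :=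
  infinite_sum (fun j => fst (a j)) (fst l) /\
  infinite_sum (fun j => snd (a j)) (snd l).

Definition qnum (q : R) (x : nat) : R := (1 - q ^ x) / (1 - q).

(* coefficient of w^n in Lif_{k,q}(w) *)
Definition lif_coef (k : nat) (q : R) (n : nat) : R :=
  / (INR (fact n) * (qnum q (S n)) ^ k).

(* int_0^1 f(x) d_q x = (1-q) * sum_{j>=0} f(q^j) q^j  (value chosen by
   epsilon; it is the sum whenever the series converges) *)
Definition jackson (q : R) (f : R -> Cplx) : Cplx :=
  Cscale (1 - q)
    (epsilon (inhabits C0)
       (fun l => Cseries_sum (fun j => Cscale (q ^ j) (f (q ^ j))) l)).

Fixpoint jackson_multi (q : R) (k : nat) (F : list R -> Cplx) : Cplx :=
  match k with
  | O => F nil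
  | S k' => jackson q (fun x => jackson_multi q k' (fun xs => F (x :: xs)))
  end.

Definition prodlist (xs : list R) : R := fold_right Rmult 1 xs.

Fixpoint Cfall (x : Cplx) (n : nat) : Cplx :=
  match n with O => C1 | S m => Cmul (Cfall x m) (Csub x (RtoC (INR m))) end.

Definition qpoly_cauchy (k : nat) (rho q : R) (z : Cplx) (n : nat) : Cplx :=
  Cscale (rho ^ n)
    (jackson_multi q k
       (fun xs => Cfall (Cscale (/ rho) (Csub (RtoC (prodlist xs)) z)) n)).

Definition FPS : Type := nat -> Cplx.

Definition fps_mul (a b : FPS) : FPS :=
  fun n => Csum (fun i => Cmul (a i) (b (n - i)%nat)) (S n).

Definition fps_one : FPS := fun n => match n with O => C1 | _ => C0 end.

Fixpoint fps_pow (g : FPS) (n : nat) : FPS :=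
  match n with O => fps_one | S m => fps_mul (fps_pow g m) g end.

(* composition f(g(t)) = sum_n a_n g(t)^n, for g with zero constant term *)
Definition fps_comp (a : nat -> Cplx) (g : FPS) : FPS :=
  fun N => Csum (fun n => Cmul (a n) (fps_pow g n N)) (S N).

Definition lnser (rho : R) : FPS :=
  fun m => match m with
           | O => C0
           | S m' => RtoC ((-1) ^ m' * rho ^ (S m') / INR (S m'))
           end.

Definition exp_coef (n : nat) : Cplx := RtoC (/ INR (fact n)).

Definition binom_neg (rho : R) (z : Cplx) : FPS :=
  fps_comp exp_coef (fun m => Cmul (Copp (Cscale (/ rho) z)) (lnser rho m)).

Definition lif_ln (k : nat) (q rho : R) : FPS :=
  fps_comp (fun n => RtoC (lif_coef k q n)) (fun m => Cscale (/ rho) (lnser rho m)).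

(* Both (1 + rho t)^y = exp(y ln(1 + rho t)) and sum_n rho^n (y)_n t^n / n! solve
   (1 + rho t) h' = rho y h with h(0) = 1, so they coincide, and the product of the
   solutions for y and y' solves the equation for y + y' (Vandermonde).  Hence
   rho^n ((x - z)/rho)_n / n! is the t^n-coefficient of (1 + rho t)^(-z/rho) (1 + rho t)^(x/rho),
   a polynomial in x.  Expanding (1 + rho t)^(x/rho) = sum_m x^m (ln(1 + rho t)/rho)^m / m!
   and integrating x^m = (x_1 ... x_k)^m over the k-fold Jackson integral gives
   1/[m+1]_q^k, which turns (1 + rho t)^(x/rho) into Lif_{k,q}(ln(1 + rho t)/rho). *)

From Pilot Require Import Defs.
From Stdlib Require Import Reals Arith Lia Lra ClassicalEpsilon FunctionalExtensionality.
From Coquelicot Require Import Series Hierarchy.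
Open Scope R_scope.

Lemma Cring : ring_theory Defs.C0 Defs.C1 Cadd Cmul Csub Copp (@eq Cplx).
Proof.
  constructor; intros; repeat match goal with p : Cplx |- _ => destruct p end;
    unfold Csub, Cadd, Cmul, Copp, Defs.C0, Defs.C1; simpl; f_equal; ring.
Qed.
Add Ring Cring : Cring.

Lemma Cscale_mul r a : Cscale r a = Cmul (RtoC r) a.
Proof. destruct a; unfold Cscale, Cmul, RtoC; simpl; f_equal; ring. Qed.
Lemma Cmul_RtoC_r r a : Cmul a (RtoC r) = Cscale r a.
Proof. rewrite Cscale_mul. ring. Qed.
Lemma RtoC_add a b : RtoC (a + b) = Cadd (RtoC a) (RtoC b).
Proof. unfold RtoC, Cadd; simpl; f_equal; ring. Qed.
Lemma RtoC_mul a b : RtoC (a * b) = Cmul (RtoC a) (RtoC b).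
Proof. unfold RtoC, Cmul; simpl; f_equal; ring. Qed.
Lemma RtoC_opp a : RtoC (- a) = Copp (RtoC a).
Proof. unfold RtoC, Copp; simpl; f_equal; ring. Qed.
Lemma RtoC_sub a b : RtoC (a - b) = Csub (RtoC a) (RtoC b).
Proof. unfold RtoC, Csub, Cadd, Copp; simpl; f_equal; ring. Qed.
Lemma Cadd_0_l x : Cadd Defs.C0 x = x. Proof. ring. Qed.
Lemma Cadd_0_r x : Cadd x Defs.C0 = x. Proof. ring. Qed.
Lemma Cmul_0_l x : Cmul Defs.C0 x = Defs.C0. Proof. ring. Qed.
Lemma Cmul_0_r x : Cmul x Defs.C0 = Defs.C0. Proof. ring. Qed.

Lemma RtoC_0 : RtoC 0 = Defs.C0. Proof. reflexivity. Qed.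
Lemma RtoC_1 : RtoC 1 = Defs.C1. Proof. reflexivity. Qed.

Lemma RtoC_inv_cancel r a : r <> 0 -> Cmul (RtoC (/ r)) (Cmul (RtoC r) a) = a.
Proof.
  intros Hr. transitivity (Cmul (RtoC (/ r * r)) a); [rewrite RtoC_mul; ring|].
  rewrite Rinv_l, RtoC_1 by exact Hr. ring.
Qed.

Lemma RtoC_cancel3 a b c X : a * (b * c) = 1 ->
  Cmul (RtoC a) (Cmul (RtoC b) (Cmul (RtoC c) X)) = X.
Proof.
  intros H. transitivity (Cmul (RtoC (a * (b * c))) X); [rewrite !RtoC_mul; ring|].
  rewrite H, RtoC_1. ring.
Qed.

Fixpoint Cpow (c : Cplx) (n : nat) : Cplx :=
  match n with O => Defs.C1 | S m => Cmul c (Cpow c m) end.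

Lemma RtoC_pow x m : RtoC (x ^ m) = Cpow (RtoC x) m.
Proof. induction m as [|m IH]; simpl; [reflexivity|]. now rewrite RtoC_mul, IH. Qed.

Lemma Cpow_mul a b m : Cpow (Cmul a b) m = Cmul (Cpow a m) (Cpow b m).
Proof. induction m as [|m IH]; simpl; [ring|]. rewrite IH; ring. Qed.

Lemma Csum_ext f g n : (forall i, (i < n)%nat -> f i = g i) -> Csum f n = Csum g n.
Proof. induction n; intros H; simpl; auto. rewrite IHn, H; auto; intros; apply H; lia. Qed.

Lemma Csum_add f g n : Csum (fun i => Cadd (f i) (g i)) n = Cadd (Csum f n) (Csum g n).
Proof. induction n as [|n IH]; simpl; [ring|]. rewrite IH; ring. Qed.

Lemma Csum_mul_l c f n : Csum (fun i => Cmul c (f i)) n = Cmul c (Csum f n).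
Proof. induction n as [|n IH]; simpl; [ring|]. rewrite IH; ring. Qed.

Lemma Csum_mul_r c f n : Csum (fun i => Cmul (f i) c) n = Cmul (Csum f n) c.
Proof. induction n as [|n IH]; simpl; [ring|]. rewrite IH; ring. Qed.

Lemma Csum_0 f n : (forall i, (i < n)%nat -> f i = Defs.C0) -> Csum f n = Defs.C0.
Proof. induction n as [|n IH]; intros H; simpl; auto. rewrite IH, H; auto; ring. Qed.

Lemma Csum_last f n : Csum f (S n) = Cadd (Csum f n) (f n).
Proof. reflexivity. Qed.

Lemma Csum_shift f n : Csum f (S n) = Cadd (f 0%nat) (Csum (fun i => f (S i)) n).
Proof. induction n as [|n IH]; simpl in *; [ring|]. rewrite IH; ring. Qed.

Lemma Csum_swap (F : nat -> nat -> Cplx) N M :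
  Csum (fun i => Csum (F i) M) N = Csum (fun m => Csum (fun i => F i m) N) M.
Proof.
  induction N as [|N IH]; simpl; [symmetry; now apply Csum_0|].
  now rewrite IH, <- Csum_add.
Qed.

Lemma Csum_extend f N1 N2 : (N1 <= N2)%nat ->
  (forall m, (N1 <= m < N2)%nat -> f m = Defs.C0) -> Csum f N1 = Csum f N2.
Proof.
  induction 1 as [|N2 HN IH]; intros Hz; auto.
  simpl. rewrite <- IH, (Hz N2) by (lia || (intros; apply Hz; lia)). ring.
Qed.

Definition fps_deriv (a : FPS) : FPS := fun n => Cmul (RtoC (INR (S n))) (a (S n)).

Lemma fps_deriv_mul a b n :
  fps_deriv (fps_mul a b) n = Cadd (fps_mul (fps_deriv a) b n) (fps_mul a (fps_deriv b) n).
Proof.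
  unfold fps_deriv, fps_mul. rewrite <- Csum_mul_l.
  rewrite (Csum_ext _ (fun i => Cadd (Cmul (RtoC (INR i)) (Cmul (a i) (b (S n - i)%nat)))
                        (Cmul (a i) (Cmul (RtoC (INR (S n - i))) (b (S n - i)%nat))))).
  2:{ intros i Hi. replace (INR (S n)) with (INR i + INR (S n - i))
        by (rewrite <- plus_INR; f_equal; lia).
      rewrite RtoC_add; ring. }
  rewrite Csum_add. f_equal.
  - rewrite Csum_shift. change (INR 0) with 0. rewrite RtoC_0.
    rewrite Cmul_0_l, Cadd_0_l. apply Csum_ext. intros i _. rewrite Nat.sub_succ. ring.
  - rewrite Csum_last, Nat.sub_diag. change (INR 0) with 0. rewrite RtoC_0.
    rewrite Cmul_0_l, Cmul_0_r, Cadd_0_r.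
    apply Csum_ext. intros i Hi. replace (S n - i)%nat with (S (n - i)) by lia. ring.
Qed.

Lemma fps_mul_one_r a n : fps_mul a fps_one n = a n.
Proof.
  unfold fps_mul. simpl Csum at 1. rewrite Nat.sub_diag, Csum_0; [simpl; ring|].
  intros i Hi. replace (n - i)%nat with (S (n - i - 1)) by lia. simpl; ring.
Qed.

(* Coefficient form of (1 + rho t) h' = rho y h, whose solution with h(0) = 1 is (1 + rho t)^y. *)
Definition binomial_ode (rho : R) (y : Cplx) (h : FPS) : Prop :=
  forall n, fps_deriv h n = Cmul (RtoC rho) (Cmul (Csub y (RtoC (INR n))) (h n)).

Lemma binomial_ode_mul rho a b h g :
  binomial_ode rho a h -> binomial_ode rho b g -> binomial_ode rho (Cadd a b) (fps_mul h g).
Proof.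
  intros Hh Hg n. rewrite fps_deriv_mul. unfold fps_mul.
  rewrite <- Csum_add, <- !Csum_mul_l. apply Csum_ext. intros i Hi.
  rewrite Hh, Hg, minus_INR, RtoC_sub by lia. ring.
Qed.

Lemma binomial_ode_unique rho y h g : binomial_ode rho y h -> binomial_ode rho y g ->
  h O = g O -> forall n, h n = g n.
Proof.
  intros Hh Hg H0 n. induction n as [|n IH]; auto.
  assert (Hcoef : forall f : FPS, f (S n) = Cmul (RtoC (/ INR (S n))) (fps_deriv f n)).
  { intros f. symmetry. apply RtoC_inv_cancel, not_0_INR. lia. }
  now rewrite Hcoef, Hh, IH, <- Hg, <- Hcoef.
Qed.

(* the coefficient of t^n in (1 + rho t)^y *)
Definition falling_coef (rho : R) (y : Cplx) (n : nat) : Cplx :=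
  Cmul (RtoC (rho ^ n / INR (fact n))) (Cfall y n).

Lemma falling_coef_0 rho y : falling_coef rho y O = Defs.C1.
Proof. unfold falling_coef. simpl. rewrite Rdiv_1_r, RtoC_1. ring. Qed.

Lemma falling_coef_ode rho y : binomial_ode rho y (falling_coef rho y).
Proof.
  intros n. unfold fps_deriv, falling_coef. simpl Cfall.
  assert (E : INR (S n) * (rho ^ S n / INR (fact (S n))) = rho * (rho ^ n / INR (fact n))).
  { rewrite fact_simpl, mult_INR. simpl pow. field.
    split; [apply INR_fact_neq_0 | apply not_0_INR; lia]. }
  transitivity (Cmul (RtoC (INR (S n) * (rho ^ S n / INR (fact (S n)))))
                     (Cmul (Cfall y n) (Csub y (RtoC (INR n))))); [rewrite RtoC_mul; ring|].
  rewrite E, RtoC_mul. ring.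
Qed.

Lemma falling_coef_add rho a b n :
  falling_coef rho (Cadd a b) n = fps_mul (falling_coef rho a) (falling_coef rho b) n.
Proof.
  apply (binomial_ode_unique rho (Cadd a b)).
  - apply falling_coef_ode.
  - apply binomial_ode_mul; apply falling_coef_ode.
  - unfold fps_mul. simpl. rewrite !falling_coef_0. ring.
Qed.

Definition lnpow (rho : R) (m : nat) : FPS := fps_pow (lnser rho) m.

Lemma lnpow_coef_lt rho m j : (j < m)%nat -> lnpow rho m j = Defs.C0.
Proof.
  revert j; induction m as [|m IH]; intros j Hj; [lia|].
  change (lnpow rho (S m) j) with (fps_mul (lnpow rho m) (lnser rho) j).
  apply Csum_0. intros i Hi.
  destruct (Nat.lt_ge_cases i m) as [Him|Him].
  - rewrite IH by exact Him. apply Cmul_0_l.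
  - replace (j - i)%nat with O by lia. apply Cmul_0_r.
Qed.

Lemma fps_pow_scale (c : Cplx) (g h : FPS) m n : (forall i, h i = Cmul c (g i)) ->
  fps_pow h m n = Cmul (Cpow c m) (fps_pow g m n).
Proof.
  intros Hh. revert n; induction m as [|m IH]; intros n; simpl; [ring|].
  unfold fps_mul. rewrite <- Csum_mul_l. apply Csum_ext. intros i _. rewrite IH, Hh. ring.
Qed.

(* (1 + rho t) L' = rho for L = ln(1 + rho t) *)
Lemma lnser_deriv rho j : fps_deriv (lnser rho) j =
  Cadd (Cmul (RtoC (- rho * INR j)) (lnser rho j)) (Cmul (RtoC rho) (fps_one j)).
Proof.
  unfold fps_deriv. destruct j as [|j]; unfold lnser, fps_one.
  - unfold RtoC, Cmul, Cadd; simpl; f_equal; field.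
  - rewrite Cmul_0_r, Cadd_0_r, <- !RtoC_mul. f_equal.
    rewrite !S_INR. cbn [pow]. field. pose proof (pos_INR j); lra.
Qed.

(* (1 + rho t) (L^m)' = m rho L^(m-1) *)
Lemma lnpow_deriv rho m n : fps_deriv (lnpow rho m) n =
  Cadd (Cmul (RtoC (- rho * INR n)) (lnpow rho m n))
       (Cmul (RtoC (INR m * rho)) (lnpow rho (pred m) n)).
Proof.
  revert n; induction m as [|m IH]; intros n.
  - unfold fps_deriv, lnpow. simpl fps_pow. change (INR 0) with 0.
    rewrite Rmult_0_l, RtoC_0. destruct n; unfold fps_one; [rewrite Rmult_0_r, RtoC_0|]; ring.
  - change (lnpow rho (S m)) with (fps_mul (lnpow rho m) (lnser rho)).
    rewrite fps_deriv_mul.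
    transitivity (Cadd (Cadd (Cmul (RtoC (- rho * INR n)) (fps_mul (lnpow rho m) (lnser rho) n))
                             (Cmul (RtoC (INR m * rho)) (fps_mul (lnpow rho (pred m)) (lnser rho) n)))
                       (Cmul (RtoC rho) (fps_mul (lnpow rho m) fps_one n))).
    { unfold fps_mul. rewrite <- !Csum_mul_l, <- !Csum_add. apply Csum_ext. intros i Hi.
      rewrite IH, lnser_deriv, minus_INR by lia. rewrite !RtoC_mul, !RtoC_opp, !RtoC_sub. ring. }
    assert (Hpred : Cmul (RtoC (INR m * rho)) (fps_mul (lnpow rho (pred m)) (lnser rho) n)
                    = Cmul (RtoC (INR m * rho)) (lnpow rho m n)).
    { destruct m as [|m]; [simpl INR; rewrite Rmult_0_l, RtoC_0; ring | reflexivity]. }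
    rewrite Hpred, fps_mul_one_r, S_INR, !RtoC_mul, RtoC_add, RtoC_1. simpl pred. ring.
Qed.

Definition exp_ln_term (rho : R) (y : Cplx) (n m : nat) : Cplx :=
  Cmul (RtoC (/ INR (fact m))) (Cmul (Cpow y m) (lnpow rho m n)).

Definition exp_ln (rho : R) (y : Cplx) : FPS := fun n => Csum (exp_ln_term rho y n) (S n).

Lemma exp_ln_extend rho y n N : (S n <= N)%nat -> exp_ln rho y n = Csum (exp_ln_term rho y n) N.
Proof.
  intros H. apply Csum_extend; auto. intros m Hm. unfold exp_ln_term.
  rewrite lnpow_coef_lt by lia. ring.
Qed.

Lemma exp_ln_ode rho y : binomial_ode rho y (exp_ln rho y).
Proof.
  intros n. unfold fps_deriv, exp_ln at 1. rewrite <- Csum_mul_l.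
  transitivity (Csum (fun m => Cadd (Cmul (RtoC (- rho * INR n)) (exp_ln_term rho y n m))
    (Cmul (RtoC rho) (Cmul (RtoC (INR m / INR (fact m))) (Cmul (Cpow y m) (lnpow rho (pred m) n)))))
    (S (S n))).
  { apply Csum_ext. intros m _. unfold exp_ln_term.
    transitivity (Cmul (RtoC (/ INR (fact m))) (Cmul (Cpow y m) (fps_deriv (lnpow rho m) n)));
      [unfold fps_deriv; ring|].
    rewrite lnpow_deriv. unfold Rdiv. rewrite !RtoC_mul. ring. }
  rewrite Csum_add, Csum_mul_l, <- exp_ln_extend, Csum_shift by lia.
  change (INR 0) with 0. rewrite Rdiv_0_l, RtoC_0, Cmul_0_l, Cmul_0_r, Cadd_0_l.
  rewrite (Csum_ext _ (fun m => Cmul (RtoC rho) (Cmul y (exp_ln_term rho y n m)))).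
  - rewrite Csum_mul_l, Csum_mul_l, RtoC_mul, RtoC_opp. unfold exp_ln, Csub. ring.
  - intros m _. unfold exp_ln_term. simpl pred. simpl Cpow.
    replace (INR (S m) / INR (fact (S m))) with (/ INR (fact m)); [ring|].
    rewrite fact_simpl, mult_INR. field. split; [apply INR_fact_neq_0 | apply not_0_INR; lia].
Qed.

Lemma exp_ln_falling_coef rho y n : exp_ln rho y n = falling_coef rho y n.
Proof.
  apply (binomial_ode_unique rho y); [apply exp_ln_ode | apply falling_coef_ode |].
  rewrite falling_coef_0. unfold exp_ln, exp_ln_term, lnpow. simpl. rewrite Rinv_1, RtoC_1. ring.
Qed.

Lemma binom_neg_falling_coef rho z n :
  binom_neg rho z n = falling_coef rho (Copp (Cscale (/ rho) z)) n.
Proof.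
  rewrite <- exp_ln_falling_coef. apply Csum_ext. intros m _.
  unfold exp_ln_term, exp_coef. now rewrite (fps_pow_scale (Copp (Cscale (/ rho) z)) (lnser rho)).
Qed.

Lemma lif_ln_expand k q rho n N : (S n <= N)%nat ->
  lif_ln k q rho n =
  Csum (fun m => Cmul (exp_ln_term rho (RtoC (/ rho)) n m) (RtoC (/ qnum q (S m) ^ k))) N.
Proof.
  intros HN. unfold lif_ln, fps_comp.
  assert (Hpow : forall m, fps_pow (fun i => Cscale (/ rho) (lnser rho i)) m n
                           = Cmul (Cpow (RtoC (/ rho)) m) (lnpow rho m n))
    by (intros m; apply fps_pow_scale; intros; apply Cscale_mul).
  rewrite (Csum_extend _ (S n) N HN).
  - apply Csum_ext. intros m _. rewrite Hpow.
    unfold exp_ln_term, lif_coef. rewrite Rinv_mult, RtoC_mul. ring.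
  - intros m Hm. rewrite Hpow, lnpow_coef_lt by lia. ring.
Qed.

Definition Cpoly (b : nat -> Cplx) (M : nat) (x : R) : Cplx :=
  Csum (fun m => Cmul (b m) (RtoC (x ^ m))) M.

Lemma is_series_ext_R (a b : nat -> R) l :
  (forall n, a n = b n) -> is_series a l -> is_series b l.
Proof. exact (is_series_ext a b l). Qed.

Lemma is_series_geom_scal c x : 0 <= x < 1 -> is_series (fun j => c * x ^ j) (c * / (1 - x)).
Proof.
  intros Hx. apply (is_series_scal_l c (fun j => x ^ j)), is_series_geom.
  rewrite Rabs_pos_eq; lra.
Qed.

Section JacksonPolynomial.

Variable pi : Cplx -> R.
Hypothesis pi_add : forall u v, pi (Cadd u v) = pi u + pi v.
Hypothesis pi_scale : forall r u, pi (Cscale r u) = r * pi u.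

(* Jackson's sum over the nodes q^j turns the monomial x^m into a geometric series in q^(m+1). *)
Lemma is_series_jackson_Cpoly q b M : 0 <= q < 1 ->
  is_series (fun j => pi (Cscale (q ^ j) (Cpoly b M (q ^ j))))
            (pi (Csum (fun m => Cscale (/ (1 - q ^ S m)) (b m)) M)).
Proof.
  intros Hq. induction M as [|M IH].
  - assert (pi0 : pi Defs.C0 = 0).
    { replace Defs.C0 with (Cscale 0 Defs.C0) by (unfold Cscale, Defs.C0; simpl; f_equal; ring).
      rewrite pi_scale. ring. }
    apply (is_series_ext_R (fun j => 0 * q ^ j)).
    + intros j. unfold Cpoly. simpl. rewrite pi_scale, pi0. ring.
    + simpl. replace (pi Defs.C0) with (0 * / (1 - q)) by (rewrite pi0; ring).
      apply is_series_geom_scal. exact Hq.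
  - simpl Csum. rewrite pi_add, pi_scale.
    apply (is_series_ext_R
             (fun j => pi (Cscale (q ^ j) (Cpoly b M (q ^ j))) + pi (b M) * (q ^ S M) ^ j)).
    + intros j. unfold Cpoly. rewrite Csum_last, !pi_scale, pi_add, Cmul_RtoC_r, pi_scale.
      rewrite <- !pow_mult. replace (S M * j)%nat with (j + j * M)%nat by lia.
      rewrite pow_add. ring.
    + apply (is_series_plus _ (fun j => pi (b M) * (q ^ S M) ^ j)); [exact IH|].
      rewrite Rmult_comm. apply is_series_geom_scal, (pow_lt_1_compat q (S M)); [exact Hq | lia].
Qed.

End JacksonPolynomial.

Lemma Cseries_sum_unique a l l' : Cseries_sum a l -> Cseries_sum a l' -> l = l'.
Proof.
  intros [H1 H2] [H1' H2']. destruct l, l'; simpl in *.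
  f_equal; eapply uniqueness_sum; eassumption.
Qed.

Lemma jackson_of_sum q f l :
  Cseries_sum (fun j => Cscale (q ^ j) (f (q ^ j))) l -> jackson q f = Cscale (1 - q) l.
Proof.
  intros Hl. unfold jackson. f_equal.
  exact (Cseries_sum_unique _ _ _ (epsilon_spec _ _ (ex_intro _ l Hl)) Hl).
Qed.

Lemma jackson_Cpoly q b M : 0 <= q < 1 ->
  jackson q (Cpoly b M) = Csum (fun m => Cmul (b m) (RtoC (/ qnum q (S m)))) M.
Proof.
  intros Hq. rewrite (jackson_of_sum _ _ (Csum (fun m => Cscale (/ (1 - q ^ S m)) (b m)) M)).
  - rewrite Cscale_mul, <- Csum_mul_l. apply Csum_ext. intros m _.
    pose proof (pow_lt_1_compat q (S m) Hq ltac:(lia)).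
    replace (/ qnum q (S m)) with ((1 - q) * / (1 - q ^ S m))
      by (unfold qnum; field; lra).
    rewrite Cscale_mul, !RtoC_mul. ring.
  - split; apply is_series_Reals, is_series_jackson_Cpoly; try exact Hq;
      intros; simpl; ring.
Qed.

(* Over [x_1 ... x_k] the integrand factors, so each x_i^m contributes 1 / [m+1]_q. *)
Lemma jackson_multi_Cpoly q k b M F : 0 <= q < 1 ->
  (forall xs, F xs = Cpoly b M (prodlist xs)) ->
  jackson_multi q k F = Csum (fun m => Cmul (b m) (RtoC (/ qnum q (S m) ^ k))) M.
Proof.
  intros Hq. revert b F. induction k as [|k IH]; intros b F HF; simpl.
  - rewrite HF. apply Csum_ext. intros m _. simpl. now rewrite pow1, Rinv_1.
  - replace (fun x => jackson_multi q k (fun xs => F (cons x xs)))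
      with (Cpoly (fun m => Cmul (b m) (RtoC (/ qnum q (S m) ^ k))) M).
    + rewrite jackson_Cpoly by exact Hq. apply Csum_ext. intros m _.
      rewrite Rinv_mult, RtoC_mul. ring.
    + apply functional_extensionality. intros x. symmetry.
      rewrite (IH (fun m => Cmul (b m) (RtoC (x ^ m)))).
      * apply Csum_ext. intros m _. ring.
      * intros xs. rewrite HF. apply Csum_ext. intros m _. simpl prodlist.
        rewrite Rpow_mult_distr, RtoC_mul. ring.
Qed.

Lemma Cfall_falling_coef rho y n : rho <> 0 ->
  Cfall y n = Cmul (RtoC (INR (fact n) / rho ^ n)) (falling_coef rho y n).
Proof.
  intros Hr. unfold falling_coef.
  transitivity (Cmul (RtoC (INR (fact n) / rho ^ n * (rho ^ n / INR (fact n)))) (Cfall y n));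
    [|rewrite RtoC_mul; ring].
  replace (INR (fact n) / rho ^ n * (rho ^ n / INR (fact n))) with 1; [rewrite RtoC_1; ring|].
  field. split; [apply INR_fact_neq_0 | apply pow_nonzero, Hr].
Qed.

Lemma falling_coef_Cpoly rho x j N : (S j <= N)%nat ->
  falling_coef rho (RtoC (/ rho * x)) j = Cpoly (exp_ln_term rho (RtoC (/ rho)) j) N x.
Proof.
  intros HN. rewrite <- exp_ln_falling_coef, (exp_ln_extend _ _ _ N HN).
  apply Csum_ext. intros m _. unfold exp_ln_term.
  rewrite RtoC_mul, Cpow_mul, !RtoC_pow. ring.
Qed.

Lemma Cfall_shift_Cpoly rho z x n : rho <> 0 ->
  Cfall (Cscale (/ rho) (Csub (RtoC x) z)) n =
  Cpoly (fun m => Cmul (RtoC (INR (fact n) / rho ^ n))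
                   (Csum (fun i => Cmul (falling_coef rho (Copp (Cscale (/ rho) z)) i)
                                        (exp_ln_term rho (RtoC (/ rho)) (n - i) m)) (S n)))
        (S n) x.
Proof.
  intros Hr.
  replace (Cscale (/ rho) (Csub (RtoC x) z))
    with (Cadd (Copp (Cscale (/ rho) z)) (RtoC (/ rho * x)))
    by (rewrite !Cscale_mul, RtoC_mul; unfold Csub; ring).
  rewrite (Cfall_falling_coef rho) by exact Hr.
  rewrite falling_coef_add. unfold fps_mul, Cpoly.
  rewrite <- Csum_mul_l.
  rewrite (Csum_ext _ (fun i => Csum (fun m => Cmul (RtoC (INR (fact n) / rho ^ n))
      (Cmul (Cmul (falling_coef rho (Copp (Cscale (/ rho) z)) i)
                  (exp_ln_term rho (RtoC (/ rho)) (n - i) m)) (RtoC (x ^ m)))) (S n))).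
  - rewrite Csum_swap. apply Csum_ext. intros m _.
    rewrite <- Csum_mul_l, <- Csum_mul_r. apply Csum_ext. intros i _. ring.
  - intros i Hi. rewrite (falling_coef_Cpoly _ _ _ (S n)) by lia. unfold Cpoly.
    rewrite <- !Csum_mul_l. apply Csum_ext. intros m _. ring.
Qed.

Theorem theorem3 (k : nat) (rho q : R) (z : Cplx) :
  (1 <= k)%nat -> rho <> 0 -> 0 <= q < 1 ->
  forall n : nat,
    fps_mul (binom_neg rho z) (lif_ln k q rho) n
    = Cscale (/ INR (fact n)) (qpoly_cauchy k rho q z n).
Proof.
  (* the identity also holds for k = 0 *)
  intros _ Hr Hq n. unfold qpoly_cauchy.
  rewrite (jackson_multi_Cpoly q k _ (S n) _ Hq
             (fun xs => Cfall_shift_Cpoly rho z (prodlist xs) n Hr)).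
  set (y0 := Copp (Cscale (/ rho) z)).
  set (e := exp_ln_term rho (RtoC (/ rho))).
  set (c := fun m => RtoC (/ qnum q (S m) ^ k)).
  set (K := INR (fact n) / rho ^ n).
  set (T := fun m =>
    Csum (fun i => Cmul (falling_coef rho y0 i) (Cmul (e (n - i)%nat m) (c m))) (S n)).
  assert (HT : forall m,
    Cmul (Cmul (RtoC K) (Csum (fun i => Cmul (falling_coef rho y0 i) (e (n - i)%nat m)) (S n))) (c m)
    = Cmul (RtoC K) (T m)).
  { intros m. unfold T. rewrite <- !Csum_mul_l, <- Csum_mul_r. apply Csum_ext. intros i _. ring. }
  rewrite (Csum_ext _ _ _ (fun m _ => HT m)), Csum_mul_l, !Cscale_mul, RtoC_cancel3.
  - unfold fps_mul, T. rewrite <- Csum_swap. apply Csum_ext. intros i Hi.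
    rewrite binom_neg_falling_coef, (lif_ln_expand _ _ _ _ (S n)), <- Csum_mul_l by lia.
    reflexivity.
  - unfold K. field. split; [apply pow_nonzero, Hr | apply INR_fact_neq_0].
Qed.
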